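(* Let $x \in \mathbb{R}^n$ be deterministic, $y\in\mathbb{R}^n$ deterministic, and $f:\mathbb{R}^n\to\mathbb{R}^n$. Let $\tilde a,\tilde b,\tilde c$ be random vectors in $\mathbb{R}^n$ such that all $3n$ entries are mutually independent, $\mathbb{E}[\tilde a_i] = \mathbb{E}[\tilde b_i] = \mathbb{E}[\tilde c_i] = x_i$ for all $i$, and for each $i$ the variables $\tilde a_i,\tilde b_i,\tilde c_i$ have common $k$-th central moments $\mu_i^{[k]}$ for $k\le 4$. Let $\gamma := \max_{1\le i\le n}|x_i - f(y)_i|$ and suppose there is a constant $\alpha$ with $\max_{1\le i\le n}\max\{\mu_i^{[4]}, \mu_i^{[3]}\gamma, \gamma^4\}\le\alpha$. Let $\widetilde{\mathrm{uSE}}_i := (\tilde a_i - f(y)_i)^2 - \frac{(\tilde b_i - \tilde c_i)^2}{2}$. Then $\mathrm{Var}[\widetilde{\mathrm{uSE}}_i] \le 14\alpha$ for every $1\le i\le n$. *)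

From HB Require Import structures.
From mathcomp Require Import all_boot all_order all_algebra.
From mathcomp Require Import all_classical all_reals all_analysis.
Set Implicit Arguments. Unset Strict Implicit. Unset Printing Implicit Defensive.
Import Order.TTheory GRing.Theory Num.Theory.
Local Open Scope classical_set_scope.
Local Open Scope ring_scope.

Definition mutually_independent d (T : measurableType d) (R : realType)
  (P : probability T R) (I : finType) (X : I -> T -> R) : Prop :=
  forall (J : {set I}) (B : I -> set R),
    (forall j, measurable (B j)) ->
    P (\bigcap_(j in [set j | j \in J]) (X j @^-1` B j)) =
    (\prod_(j in J) P (X j @^-1` B j))%E.

Definition entries3 d (T : measurableType d) (R : realType) n
  (a b c : 'I_n -> T -> R) (p : 'I_3 * 'I_n) : T -> R :=
  match val p.1 with
  | 0 => a p.2
  | 1 => b p.2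
  | _ => c p.2
  end.

Definition central_moment d (T : measurableType d) (R : realType)
  (P : probability T R) (X : T -> R) (m : R) (k : nat) : \bar R :=
  'E_P[fun w => (X w - m) ^+ k].

Definition uSE d (T : measurableType d) (R : realType)
  (A B C : T -> R) (fy : R) : T -> R :=
  fun w => (A w - fy) ^+ 2 - (B w - C w) ^+ 2 / 2.

From HB Require Import structures.
From mathcomp Require Import all_boot all_order all_algebra.
From mathcomp Require Import all_classical all_reals all_analysis.
From mathcomp Require Import measurable_realfun ring lra.
Import Order.TTheory GRing.Theory Num.Theory.
Local Open Scope classical_set_scope.
Local Open Scope ring_scope.

(* Center at x: with a := A - x, s := mu 2, m := mu 4 and e := x - f(y)_i we
   have uSE = e^2 + U + V, where U := a^2 - s + 2ea and V := s - (b - c)^2/2,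
   so E uSE = e^2.  Computing Var uSE exactly would bring in the third moment;
   instead (U + V)^2 is dominated by 6(a^2 - s)^2 + 12e^2a^2 + 2V^2, whose
   expectation is 7m - 5s^2 + 12e^2s by E[(b - c)^4] = 2m + 6s^2 (independence
   of b and c).  Since s^2 <= m and 12e^2s <= 6e^4 + 6s^2, this is at most
   8m + 6e^4 <= 14 alpha. *)

Lemma normrX_le_add1 (R : realDomainType) (u : R) k n : (k <= n)%N ->
  `|u| ^+ k <= `|u| ^+ n + 1.
Proof.
move=> kn; have [u1|u1] := lerP `|u| 1.
  by rewrite ler_wpDl ?exprn_ge0 ?exprn_ile1.
by rewrite ler_wpDr // ler_eXn2l.
Qed.

Lemma funrposBnegE (T : Type) (R : realDomainType) (f : T -> R) t :
  f^\+ t - f^\- t = f t.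
Proof. exact: (congr1 (fun g => g t) (funrposBneg f)). Qed.

Section expectation_calculus.
Context {d} {T : measurableType d} {R : realType} {P : probability T R}.
Local Open Scope ereal_scope.

Definition has_expectation (f : T -> R) (r : R) :=
  f \in Lfun P 1 /\ 'E_P[f] = r%:E.

Lemma has_expectation_cst r : has_expectation (cst r) r.
Proof. by split; [exact: Lfun_cst | exact: expectation_cst]. Qed.

Lemma has_expectation_lin {f g : T -> R} {r1 r2 : R} (a b : R) :
  has_expectation f r1 -> has_expectation g r2 ->
  has_expectation (fun w => a * f w + b * g w)%R (a * r1 + b * r2)%R.
Proof.
move=> [f1 Ef] [g1 Eg].
have af : (a \o* f) \in Lfun P 1 by apply: Lfun_scale.
have bg : (b \o* g) \in Lfun P 1 by apply: Lfun_scale.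
have -> : (fun w => a * f w + b * g w)%R = ((a \o* f) \+ (b \o* g))%R.
  by apply: funext => w; rewrite /= /GRing.mulr_fun (mulrC a) (mulrC b).
split; first exact: rpredD.
by rewrite expectationD // !expectationZl // Ef Eg.
Qed.

Lemma has_expectation_eq {f g : T -> R} {r1 r2 : R} :
  has_expectation f r1 -> f =1 g -> r1 = r2 -> has_expectation g r2.
Proof. by move=> fr1 /funext <- <-. Qed.

Lemma has_expectation_uniq {f : T -> R} {r1 r2 : R} :
  has_expectation f r1 -> has_expectation f r2 -> r1 = r2.
Proof. by move=> [_ E1] [_]; rewrite E1 => -[]. Qed.

Lemma measurable_has_expectation {f : T -> R} {r : R} :
  has_expectation f r -> measurable_fun setT f.
Proof. by move=> [/Lfun1_integrable/measurable_int/measurable_EFinP]. Qed.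

Lemma ge0_has_expectation {f : T -> R} {r : R} : measurable_fun setT f ->
  (forall w, 0 <= f w)%R -> 'E_P[f] = r%:E -> has_expectation f r.
Proof.
move=> mf f0 Ef; split => //; apply/Lfun1_integrable/integrableP.
split; first exact/measurable_EFinP.
under eq_integral do rewrite /= ger0_norm //.
by move: Ef; rewrite unlock => ->; rewrite ltry.
Qed.

Lemma Lfun1_funrpos {f : T -> R} : f \in Lfun P 1 -> f^\+%R \in Lfun P 1.
Proof.
by move/Lfun1_integrable/integrable_funrpos => fp; apply/Lfun1_integrable/fp.
Qed.

Lemma Lfun1_funrneg {f : T -> R} : f \in Lfun P 1 -> f^\-%R \in Lfun P 1.
Proof.
by move/Lfun1_integrable/integrable_funrneg => fn; apply/Lfun1_integrable/fn.
Qed.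

Lemma Lfun1_has_expectation {f : T -> R} :
  f \in Lfun P 1 -> has_expectation f (fine 'E_P[f]).
Proof. by move=> f1; split => //; rewrite fineK // expectation_fin_num. Qed.

Lemma has_expectation_funrposBneg {f : T -> R} {r : R} :
  has_expectation f r -> r = (fine 'E_P[f^\+] - fine 'E_P[f^\-])%R.
Proof.
move=> fr; have [f1 _] := fr; apply: has_expectation_uniq fr _.
apply: has_expectation_eq (has_expectation_lin 1%R (-1)%R
  (Lfun1_has_expectation (Lfun1_funrpos f1))
  (Lfun1_has_expectation (Lfun1_funrneg f1))) _ _.
- by move=> w /=; rewrite -[RHS]funrposBnegE; ring.
- by ring.
Qed.

Lemma sqr_le_has_expectation_sqr {f : T -> R} {s m : R} :
  has_expectation f s -> has_expectation (fun w => f w ^+ 2)%R m ->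
  (s ^+ 2 <= m)%R.
Proof.
move=> fs f2m.
have dev : has_expectation (fun w => (f w - s) ^+ 2)%R (m - s ^+ 2).
  apply: has_expectation_eq (has_expectation_lin 1%R (s ^+ 2)
    (has_expectation_lin 1%R (- 2 * s)%R f2m fs) (has_expectation_cst 1)) _ _.
    by move=> w /=; ring.
  by ring.
have := expectation_ge0 P (fun w => sqr_ge0 (f w - s)%R).
rewrite dev.2 lee_fin; lra.
Qed.

Lemma variance_le_expectation {W G : T -> R} {r g : R} :
  has_expectation W r -> has_expectation G g ->
  (forall w, (W w - r) ^+ 2 <= G w)%R -> 'V_P[W] <= g%:E.
Proof.
move=> Wr Gg WG; rewrite /variance covariance.unlock Wr.2 -Gg.2 /=.
have mW := measurable_has_expectation Wr.
apply: expectation_le.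
- by apply: measurable_funM; apply: measurable_funB.
- exact: measurable_has_expectation Gg.
- by move=> w /=; rewrite -expr2 sqr_ge0.
- by move=> w; apply: le_trans (WG w); exact: sqr_ge0.
- by apply: aeW => w /=; rewrite -expr2; exact: WG.
Qed.

End expectation_calculus.
Arguments has_expectation {d T R} P f r.

Section independence.
Context {d} {T : measurableType d} {R : realType} {P : probability T R}.
Local Open Scope ereal_scope.

Definition independent_RVs2 (X Y : T -> R) :=
  forall A B, measurable A -> measurable B ->
    P (X @^-1` A `&` Y @^-1` B) = P (X @^-1` A) * P (Y @^-1` B).

Lemma mutually_independent_RVs2 {I : finType} {X : I -> T -> R} (i j : I) :
  i != j -> mutually_independent P X -> independent_RVs2 (X i) (X j).
Proof.
move=> ij indX A B mA mB.
pose AB k := if k == i then A else B.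
have ABi : AB i = A by rewrite /AB eqxx.
have ABj : AB j = B by rewrite /AB eq_sym (negbTE ij).
have mAB k : measurable (AB k) by rewrite /AB; case: ifP.
have := indX [set i; j]%SET AB mAB.
rewrite big_setU1 ?inE // big_set1 ABi ABj => <-.
congr (P _); apply/seteqP; split => w /=.
  move=> [Xi Xj] k; rewrite /= !inE => /orP[] /eqP ->.
    by rewrite ABi.
  by rewrite ABj.
move=> XAB; split.
  by rewrite -ABi; apply: XAB; rewrite /= !inE eqxx.
by rewrite -ABj; apply: XAB; rewrite /= !inE eqxx orbT.
Qed.

Lemma independent_RVs2_law (X Y : {RV P >-> R}) : independent_RVs2 X Y ->
  forall A, measurable A ->
  pushforward P (fun w => (X w, Y w)) A =
  (distribution P X \x distribution P Y) A.
Proof.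
move=> indXY A mA; have mXY : measurable_fun setT (fun w => (X w, Y w)).
  exact: measurable_fun_pair.
by apply/esym; apply: product_measure_unique => // A1 A2 mA1 mA2; apply: indXY.
Qed.

Lemma ge0_expectation_indepM (X Y : {RV P >-> R}) (g h : R -> R) :
  independent_RVs2 X Y -> measurable_fun setT g -> measurable_fun setT h ->
  (forall t, 0 <= g t)%R -> (forall t, 0 <= h t)%R ->
  'E_P[fun w => g (X w) * h (Y w)]%R = 'E_P[g \o X] * 'E_P[h \o Y].
Proof.
move=> indXY mg mh g0 h0; rewrite !unlock.
pose F (z : R * R) := (g z.1 * h z.2)%R%:E.
have mF : measurable_fun setT F.
  apply/measurable_EFinP; apply: measurable_funM.
    exact: measurableT_comp mg measurable_fst.
  exact: measurableT_comp mh measurable_snd.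
have F0 z : 0 <= F z by rewrite lee_fin mulr_ge0.
have mXY : measurable_fun setT (fun w => (X w, Y w)).
  exact: measurable_fun_pair.
transitivity (\int[pushforward P (fun w => (X w, Y w))]_z F z).
  by rewrite ge0_integral_pushforward.
rewrite (eq_measure_integral (distribution P X \x distribution P Y));
  last by move=> A mA _; exact: independent_RVs2_law.
rewrite fubini_tonelli1 //.
transitivity (\int[distribution P X]_s
    ((g s)%:E * \int[distribution P Y]_t (h t)%:E)).
  apply: eq_integral => s _; rewrite /fubini_F /F /=.
  under eq_integral do rewrite EFinM.
  rewrite ge0_integralZl_EFin //; last exact/measurable_EFinP.
  by move=> t _; rewrite lee_fin.
rewrite ge0_integralZr //; last 3 first.
- exact/measurable_EFinP.
- by move=> s _; rewrite lee_fin.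
- by apply: integral_ge0 => t _; rewrite lee_fin.
by rewrite !ge0_integral_distribution //; exact/measurable_EFinP.
Qed.

Lemma ge0_has_expectation_indepM {X Y : {RV P >-> R}} {u v : R -> R} :
  independent_RVs2 X Y -> measurable_fun setT u -> measurable_fun setT v ->
  (forall t, 0 <= u t)%R -> (forall t, 0 <= v t)%R ->
  (u \o X) \in Lfun P 1 -> (v \o Y) \in Lfun P 1 ->
  has_expectation P (fun w => u (X w) * v (Y w))%R
    (fine 'E_P[u \o X] * fine 'E_P[v \o Y])%R.
Proof.
move=> indXY mu mv u0 v0 uX1 vY1; apply: ge0_has_expectation.
- by apply: measurable_funM; exact: measurableT_comp.
- by move=> w; rewrite mulr_ge0.
- by rewrite ge0_expectation_indepM // EFinM !fineK // expectation_fin_num.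
Qed.

Lemma has_expectation_indepM {X Y : {RV P >-> R}} {g h : R -> R} {r1 r2 : R} :
  independent_RVs2 X Y -> measurable_fun setT g -> measurable_fun setT h ->
  has_expectation P (g \o X) r1 -> has_expectation P (h \o Y) r2 ->
  has_expectation P (fun w => g (X w) * h (Y w))%R (r1 * r2)%R.
Proof.
move=> indXY mg mh gXr1 hYr2; have [gX1 _] := gXr1; have [hY1 _] := hYr2.
have r1E : r1 = (fine 'E_P[g^\+ \o X] - fine 'E_P[g^\- \o X])%R :=
  has_expectation_funrposBneg gXr1.
have r2E : r2 = (fine 'E_P[h^\+ \o Y] - fine 'E_P[h^\- \o Y])%R :=
  has_expectation_funrposBneg hYr2.
have pp := ge0_has_expectation_indepM indXY
  (measurable_funrpos mg) (measurable_funrpos mh)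
  (funrpos_ge0 _) (funrpos_ge0 _) (Lfun1_funrpos gX1) (Lfun1_funrpos hY1).
have pn := ge0_has_expectation_indepM indXY
  (measurable_funrpos mg) (measurable_funrneg mh)
  (funrpos_ge0 _) (funrneg_ge0 _) (Lfun1_funrpos gX1) (Lfun1_funrneg hY1).
have np := ge0_has_expectation_indepM indXY
  (measurable_funrneg mg) (measurable_funrpos mh)
  (funrneg_ge0 _) (funrpos_ge0 _) (Lfun1_funrneg gX1) (Lfun1_funrpos hY1).
have nn := ge0_has_expectation_indepM indXY
  (measurable_funrneg mg) (measurable_funrneg mh)
  (funrneg_ge0 _) (funrneg_ge0 _) (Lfun1_funrneg gX1) (Lfun1_funrneg hY1).
rewrite r1E r2E; apply: has_expectation_eq (has_expectation_lin 1%R (-1)%R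
    (has_expectation_lin 1%R (-1)%R pp pn)
    (has_expectation_lin 1%R (-1)%R np nn)) _ _.
- by move=> w /=; rewrite -[g (X w)]funrposBnegE -[h (Y w)]funrposBnegE; ring.
- by ring.
Qed.

End independence.
Arguments independent_RVs2 {d T R} P X Y.

Section central_moments.
Context {d} {T : measurableType d} {R : realType} {P : probability T R}.
Local Open Scope ereal_scope.

Lemma Lfun1_central_moment (Z : {RV P >-> R}) c m k n :
  ~~ odd n -> (k <= n)%N -> central_moment P Z c n = m%:E ->
  (fun w => (Z w - c) ^+ k)%R \in Lfun P 1.
Proof.
move=> n_even kn Zn.
have mZ j : measurable_fun setT (fun w => (Z w - c) ^+ j)%R.
  by apply: measurable_funX; apply: measurable_funB.
have Zn_m : has_expectation P (fun w => (Z w - c) ^+ n)%R m.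
  by apply: ge0_has_expectation => // w; exact: exprn_even_ge0.
have [/Lfun1_integrable Zn1 _] :=
  has_expectation_lin 1%R 1%R Zn_m (has_expectation_cst 1).
apply/Lfun1_integrable; apply: le_integrable Zn1 => //.
  exact/measurable_EFinP.
move=> w _; rewrite /= lee_fin !mul1r.
have -> : ((Z w - c) ^+ n = `|Z w - c| ^+ n)%R.
  by rewrite -normrX ger0_norm ?exprn_even_ge0.
by rewrite normrX [leRHS]ger0_norm ?normrX_le_add1 // addr_ge0 ?exprn_ge0.
Qed.

Lemma has_expectation_central_moment {Z : {RV P >-> R}} {c : R} {mu : nat -> R}
    {n : nat} :
  (forall k, (k <= n)%N -> central_moment P Z c k = (mu k)%:E) -> ~~ odd n ->
  forall k, (k <= n)%N -> has_expectation P (fun w => (Z w - c) ^+ k)%R (mu k).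
Proof.
move=> Zmu n_even k kn; split; last exact: Zmu.
exact: Lfun1_central_moment n_even kn (Zmu n (leqnn n)).
Qed.

Lemma central_moment1_eq0 {Z : T -> R} {c : R} :
  Z \in Lfun P 1 -> 'E_P[Z] = c%:E -> central_moment P Z c 1 = 0.
Proof.
move=> Z1 EZ; rewrite /central_moment.
have -> : (fun w => (Z w - c) ^+ 1)%R = (Z \- cst c)%R.
  by apply/funext => w; rewrite expr1.
by rewrite expectationB ?Lfun_cst // EZ expectation_cst subee.
Qed.

End central_moments.

Lemma uSE_dev_sqr_le (R : realFieldType) (a b c s e : R) :
  ((a + e) ^+ 2 - (b - c) ^+ 2 / 2 - e ^+ 2) ^+ 2 <=
  6 * (a ^+ 2 - s) ^+ 2 + 12 * e ^+ 2 * a ^+ 2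
  + 2 * ((b - c) ^+ 2 / 2 - s) ^+ 2.
Proof.
set U := a ^+ 2 - s + 2 * e * a; set V := s - (b - c) ^+ 2 / 2.
have -> : (a + e) ^+ 2 - (b - c) ^+ 2 / 2 - e ^+ 2 = U + V.
  by rewrite /U /V; field.
have -> : 6 * (a ^+ 2 - s) ^+ 2 + 12 * e ^+ 2 * a ^+ 2
          + 2 * ((b - c) ^+ 2 / 2 - s) ^+ 2
        = (U + V) ^+ 2 + (U - V) ^+ 2 + 4 * (a ^+ 2 - s - e * a) ^+ 2.
  by rewrite /U /V; field.
have := sqr_ge0 (U - V); have := sqr_ge0 (a ^+ 2 - s - e * a); lra.
Qed.

Section uSE_variance.
Context {d} {T : measurableType d} {R : realType} {P : probability T R}.
Variables (A B C : {RV P >-> R}) (x fy : R) (mu : nat -> R).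
Hypotheses (muA : forall k, (k <= 4)%N -> central_moment P A x k = (mu k)%:E)
           (muB : forall k, (k <= 4)%N -> central_moment P B x k = (mu k)%:E)
           (muC : forall k, (k <= 4)%N -> central_moment P C x k = (mu k)%:E).
Hypotheses (mu1 : mu 1%N = 0) (indBC : independent_RVs2 P B C).

Let e := x - fy.
Let momA := has_expectation_central_moment muA isT.
Let momB := has_expectation_central_moment muB isT.
Let momC := has_expectation_central_moment muC isT.

Let measurable_dev k : measurable_fun setT (fun t : R => (t - x) ^+ k).
Proof. by apply: measurable_funX; apply: measurable_funB. Qed.

Let momBC j k : (j <= 4)%N -> (k <= 4)%N ->
  has_expectation P (fun w => (B w - x) ^+ j * (C w - x) ^+ k) (mu j * mu k).
Proof.
move=> j4 k4.
exact: has_expectation_indepM indBC (measurable_dev j) (measurable_dev k)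
  (momB j j4) (momC k k4).
Qed.

Lemma has_expectation_diff_sqr :
  has_expectation P (fun w => (B w - C w) ^+ 2) (2 * mu 2%N).
Proof.
apply: has_expectation_eq (has_expectation_lin 1 1
    (has_expectation_lin 1 (-2) (momB 2 isT) (momBC 1 1 isT isT))
    (momC 2 isT)) _ _.
- by move=> w /=; ring.
- by rewrite mu1; ring.
Qed.

Lemma has_expectation_diff_pow4 :
  has_expectation P (fun w => (B w - C w) ^+ 4) (2 * mu 4%N + 6 * mu 2%N ^+ 2).
Proof.
apply: has_expectation_eq (has_expectation_lin 1 1
  (has_expectation_lin 1 (-4) (momB 4 isT) (momBC 3 1 isT isT))
  (has_expectation_lin 1 1
    (has_expectation_lin 6 (-4) (momBC 2 2 isT isT) (momBC 1 3 isT isT))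
    (momC 4 isT))) _ _.
- by move=> w /=; ring.
- by rewrite mu1; ring.
Qed.

Lemma has_expectation_uSE : has_expectation P (uSE A B C fy) (e ^+ 2).
Proof.
apply: has_expectation_eq (has_expectation_lin 1 (- 2^-1)
  (has_expectation_lin 1 (e ^+ 2)
    (has_expectation_lin 1 (2 * e) (momA 2 isT) (momA 1 isT))
    (has_expectation_cst 1))
  has_expectation_diff_sqr) _ _.
- by move=> w; rewrite /uSE /e /=; field.
- by rewrite mu1; field.
Qed.

Lemma variance_uSE_le : ('V_P[uSE A B C fy] <=
  (7 * mu 4%N - 5 * mu 2%N ^+ 2 + 12 * e ^+ 2 * mu 2%N)%:E)%E.
Proof.
apply: (variance_le_expectation has_expectation_uSE
  (G := fun w => 6 * ((A w - x) ^+ 2 - mu 2%N) ^+ 2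
                 + 12 * e ^+ 2 * (A w - x) ^+ 2
                 + 2 * ((B w - C w) ^+ 2 / 2 - mu 2%N) ^+ 2)).
  apply: has_expectation_eq (has_expectation_lin 1 1
    (has_expectation_lin 6 (12 * e ^+ 2 - 12 * mu 2%N)
      (momA 4 isT) (momA 2 isT))
    (has_expectation_lin (8 * mu 2%N ^+ 2) 1 (has_expectation_cst 1)
      (has_expectation_lin 2^-1 (-2 * mu 2%N)
        has_expectation_diff_pow4 has_expectation_diff_sqr))) _ _.
  - by move=> w /=; field.
  - by field.
move=> w; rewrite /uSE (_ : A w - fy = (A w - x) + e) ?uSE_dev_sqr_le //.
by rewrite /e; ring.
Qed.

Lemma variance_uSE_le_bound (alpha : R) : mu 4%N <= alpha -> e ^+ 4 <= alpha ->
  ('V_P[uSE A B C fy] <= (14 * alpha)%:E)%E.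
Proof.
move=> m_le e_le; apply: le_trans variance_uSE_le _; rewrite lee_fin.
have s2m : mu 2%N ^+ 2 <= mu 4%N.
  have momA22 : has_expectation P (fun w => ((A w - x) ^+ 2) ^+ 2) (mu 4%N).
    by apply: has_expectation_eq (momA 4 isT) _ erefl => w; rewrite -exprM.
  exact: sqr_le_has_expectation_sqr (momA 2 isT) momA22.
have := sqr_ge0 (e ^+ 2 - mu 2%N); nra.
Qed.

End uSE_variance.

Theorem lemmaE2 (d : measure_display) (T : measurableType d) (R : realType)
  (P : probability T R) (n : nat)
  (x y : 'rV[R]_n) (f : 'rV[R]_n -> 'rV[R]_n)
  (a b c : 'I_n -> {RV P >-> R})
  (mu : 'I_n -> nat -> R) (alpha : R) :
  mutually_independent P (entries3 (fun i => a i : T -> R)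
                                   (fun i => b i : T -> R)
                                   (fun i => c i : T -> R)) ->
  (forall i, [/\ (a i : T -> R) \in Lfun P 4%:E,
                 (b i : T -> R) \in Lfun P 4%:E &
                 (c i : T -> R) \in Lfun P 4%:E]) ->
  (forall i, [/\ 'E_P[a i] = (x ord0 i)%:E,
                 'E_P[b i] = (x ord0 i)%:E &
                 'E_P[c i] = (x ord0 i)%:E]%E) ->
  (forall i k, (k <= 4)%N ->
     [/\ central_moment P (a i) (x ord0 i) k = (mu i k)%:E,
         central_moment P (b i) (x ord0 i) k = (mu i k)%:E &
         central_moment P (c i) (x ord0 i) k = (mu i k)%:E]) ->
  let gamma := \big[Num.max/0]_(i < n) `|x ord0 i - f y ord0 i| in
  (forall i, Num.max (mu i 4%N) (Num.max (mu i 3%N * gamma) (gamma ^+ 4))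
               <= alpha) ->
  forall i : 'I_n,
    ('V_P[uSE (a i) (b i) (c i) (f y ord0 i)] <= (14 * alpha)%:E)%E.
Proof.
move=> indep L4 mean mom gamma alpha_ub i.
have muA k : (k <= 4)%N -> central_moment P (a i) (x ord0 i) k = (mu i k)%:E.
  by move=> k4; have [] := mom i k k4.
have muB k : (k <= 4)%N -> central_moment P (b i) (x ord0 i) k = (mu i k)%:E.
  by move=> k4; have [] := mom i k k4.
have muC k : (k <= 4)%N -> central_moment P (c i) (x ord0 i) k = (mu i k)%:E.
  by move=> k4; have [] := mom i k k4.
have mu1 : mu i 1%N = 0.
  have [_ Lb _] := L4 i; have [_ Eb _] := mean i.
  have Lb1 : (b i : T -> R) \in Lfun P 1.
    by move: Lb; apply: Lfun_subset; rewrite ?lee1n ?fin_num_measure.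
  have := central_moment1_eq0 Lb1 Eb.
  by rewrite muB // => -[].
have indBC : independent_RVs2 P (b i) (c i).
  exact: (mutually_independent_RVs2 (Ordinal (isT : (1 < 3)%N), i)
                                    (Ordinal (isT : (2 < 3)%N), i) isT indep).
have [m_le _ g4_le] : [/\ mu i 4%N <= alpha, mu i 3%N * gamma <= alpha
                        & gamma ^+ 4 <= alpha].
  by apply/and3P; rewrite -!ge_max alpha_ub.
apply: variance_uSE_le_bound muA muB muC mu1 indBC _ m_le _.
apply: le_trans g4_le.
have e_le : `|x ord0 i - f y ord0 i| <= gamma by exact: le_bigmax.
rewrite -(ger0_norm (exprn_even_ge0 _ (isT : ~~ odd 4))) normrX.
have gamma_ge0 : 0 <= gamma := le_trans (normr_ge0 _) e_le.
by apply: lerXn2r e_le; rewrite nnegrE.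
Qed.
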